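(* Let $G$ be a graph and $uv\in E(G)$. Let $W_1=N(u)\setminus N[v]$, $W_2=N(u)\cap N(v)$, $W_3=N(v)\setminus N[u]$ and $W_4=V(G)\setminus (N[u]\cup N[v])$. Suppose there is no maximal induced matching $M$ of $G$ with $V(M)\subseteq W_1\cup W_4$ and $V(M)\cap W_1\ne\emptyset$, and there is no maximal induced matching $M$ of $G$ with $V(M)\subseteq W_3\cup W_4$ and $V(M)\cap W_3\neq\emptyset$. Then $|M_{G_{u\to v}}|\ge |M_G|$ or $|M_{G_{v\to u}}|\ge |M_G|$.
   Context: Graphs are finite, simple, undirected. $N(x)$, $N[x]$ are the open and closed neighborhoods. An induced matching is a matching whose endpoints induce a $1$-regular subgraph; it is maximal if not properly contained in another induced matching; $M_G$ is the set of maximal induced matchings of $G$; $V(M)$ is the set of vertices covered by $M$. For $uv\in E(G)$, $G_{v\to u}$ is the graph obtained from $G$ by deleting the edge $vx$ for every $x\in N(v)\setminus N[u]$ and adding the edge $vy$ for every $y\in N(u)\setminus N[v]$ (so that $N[v]=N[u]$ afterwards); $G_{u\to v}$ is defined symmetrically. *)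

(* A simple graph is a symmetric irreflexive relation e on a finType T. *)
From mathcomp Require Import all_boot.
Set Implicit Arguments. Unset Strict Implicit. Unset Printing Implicit Defensive.

Section Graphs.
Variable T : finType.
Variable e : rel T.

Definition N (x : T) : {set T} := [set y | e x y].
Definition Nc (x : T) : {set T} := x |: N x.

Definition edgeb (f : {set T}) : bool :=
  [exists x, exists y, e x y && (f == [set x; y])].

Definition VM (M : {set {set T}}) : {set T} := \bigcup_(f in M) f.

Definition matchingb (M : {set {set T}}) : bool :=
  [forall f in M, edgeb f] &&
  [forall f in M, forall g in M, (f != g) ==> [disjoint f & g]].

Definition induced_matchingb (M : {set {set T}}) : bool :=
  matchingb M &&
  [forall x in VM M, #|[set y in VM M | e x y]| == 1].

Definition maximal_induced_matchingb (M : {set {set T}}) : bool :=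
  induced_matchingb M &&
  [forall M' : {set {set T}}, (M \proper M') ==> ~~ induced_matchingb M'].

Definition MIM : {set {set {set T}}} := [set M | maximal_induced_matchingb M].
End Graphs.

(* G_{a -> b}: delete a x for x in N(a) \ N[b], add a y for y in N(b) \ N[a],
   so that N[a] = N[b] afterwards. *)
Definition shift_adj (T : finType) (e : rel T) (a b : T) (y : T) : bool :=
  (e a y && ~~ ((y \in N e a) && (y \notin Nc e b))) ||
  ((y \in N e b) && (y \notin Nc e a)).

Definition shift (T : finType) (e : rel T) (a b : T) : rel T :=
  fun x y => if x == a then shift_adj e a b y
             else if y == a then shift_adj e a b x
             else e x y.

(* Split M_G according to which of u, v a maximal induced matching covers:
   A (both), B (neither), U (only u), V (only v).  In G_{u->v} the vertices u
   and v are adjacent twins, so transposing them is an automorphism.  Every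
   M in B or V is still maximal in G_{u->v}; for B this is exactly what the
   hypothesis on W1 and W4 guarantees.  Each M in A contains uv and extends to
   a maximal induced matching of G_{u->v}, from which M is recovered by
   discarding the edges meeting W1.  Counting V twice (itself and its image
   under the transposition) gives |A| + |B| + 2|V| <= |M_{G_{u->v}}|, and
   symmetrically |A| + |B| + 2|U| <= |M_{G_{v->u}}|; the two bounds sum to
   2|M_G|. *)

From mathcomp Require Import all_boot all_fingroup zify.
Set Implicit Arguments. Unset Strict Implicit. Unset Printing Implicit Defensive.

Section InducedMatchings.
Variable T : finType.
Implicit Types (M : {set {set T}}) (f g : {set T}) (x y z : T) (s : {perm T}).

Lemma VMP x M : reflect (exists2 f, f \in M & x \in f) (x \in VM M).
Proof. exact: bigcupP. Qed.

Lemma mem_VM f M x : f \in M -> x \in f -> x \in VM M.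
Proof. by move=> fM xf; apply/VMP; exists f. Qed.

Lemma VMS M1 M2 : M1 \subset M2 -> VM M1 \subset VM M2.
Proof. by move=> /subsetP sM; apply/subsetP => x /VMP [f /sM]; apply: mem_VM. Qed.

Lemma VMU1 f M : VM (f |: M) = f :|: VM M.
Proof. by rewrite /VM bigcup_setU big_set1. Qed.

Lemma eq_induced_matching (e e' : rel T) M :
  {in VM M &, e =2 e'} -> induced_matchingb e M = induced_matchingb e' M.
Proof.
move=> ee'; rewrite /induced_matchingb /matchingb; congr (_ && _ && _).
  apply: eq_forallb_in => f fM; do 2![apply: eq_existsb => ?].
  by case: eqP => [fE|]; rewrite ?andbF ?andbT // ee' // (mem_VM fM) ?fE ?set21 ?set22.
apply: eq_forallb_in => x xV.
suff -> : [set y in VM M | e x y] = [set y in VM M | e' x y] by [].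
by apply/setP => y; rewrite !inE; case yV: (y \in VM M); rewrite //= ee'.
Qed.

Variable e : rel T.
Hypothesis sym_e : symmetric e.
Hypothesis irr_e : irreflexive e.

Lemma edgebP f : reflect (exists x y, e x y /\ f = [set x; y]) (edgeb e f).
Proof.
apply: (iffP existsP) => [[x /existsP [y /andP [exy /eqP ->]]]|[x [y [exy ->]]]].
  by exists x, y.
by exists x; apply/existsP; exists y; rewrite exy eqxx.
Qed.

Lemma matchingP M : reflect
  ({in M, forall f, edgeb e f} /\ {in M &, forall f g, f != g -> [disjoint f & g]})
  (matchingb e M).
Proof.
apply: (iffP andP) => [[/forall_inP edgeM /forall_inP disjM]|[edgeM disjM]].
  by split=> // f g /disjM /forall_inP dM /dM /implyP.
split; apply/forall_inP => // f fM.
by apply/forall_inP => g gM; apply/implyP; apply: disjM.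
Qed.

Lemma matching_eq M f g x :
  matchingb e M -> f \in M -> g \in M -> x \in f -> x \in g -> f = g.
Proof.
move=> /matchingP [_ disjM] fM gM xf xg; apply/eqP; apply: contraTT xg => ne.
by rewrite (disjointFr (disjM f g fM gM ne) xf).
Qed.

Lemma matchingS M1 M2 : M1 \subset M2 -> matchingb e M2 -> matchingb e M1.
Proof.
move=> /subsetP sM /matchingP [edgeM disjM]; apply/matchingP.
by split=> [f /sM /edgeM | f g /sM fM /sM /(disjM f g fM)].
Qed.

Lemma matching_partner M x :
  matchingb e M -> x \in VM M -> exists2 y, e x y & [set x; y] \in M.
Proof.
move=> /matchingP [edgeM _] /VMP [f fM xf].
have /edgebP [p [q [epq fE]]] := edgeM f fM.
move: xf; rewrite fE => /set2P [->|->]; first by exists q; rewrite -?fE.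
by exists p; rewrite 1?sym_e // setUC -fE.
Qed.

Lemma closed_matching_nbr M x y z : matchingb e M ->
  {in VM M &, forall x y, e x y -> [set x; y] \in M} ->
  e x y -> [set x; y] \in M -> z \in VM M -> e x z = (z == y).
Proof.
move=> mM closedM exy xyM zV; apply/idP/eqP => [exz|-> //].
have xV := mem_VM xyM (set21 x y).
have /set2P [zx|//] : z \in [set x; y].
  by rewrite -(matching_eq mM (closedM x z xV zV exz) xyM (set21 x z) (set21 x y)) set22.
by rewrite zx irr_e in exz.
Qed.

Lemma induced_matchingP M : reflect
  (matchingb e M /\ {in VM M &, forall x y, e x y -> [set x; y] \in M})
  (induced_matchingb e M).
Proof.
apply: (iffP andP) => -[mM closedM]; split=> //.
  move=> x y xV yV exy; have [p exp xpM] := matching_partner mM xV.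
  have /forall_inP/(_ x xV)/cards1P [q Nx] := closedM.
  have : p \in [set y in VM M | e x y].
    by rewrite inE exp andbT; apply: mem_VM xpM (set22 x p).
  have : y \in [set y in VM M | e x y] by rewrite inE yV exy.
  by rewrite Nx !inE => /eqP -> /eqP <-.
apply/forall_inP => x xV; have [p exp xpM] := matching_partner mM xV.
apply/cards1P; exists p; apply/setP => z; rewrite !inE.
have [zV|zNV] /= := boolP (z \in VM M).
  exact: (closed_matching_nbr mM closedM exp xpM zV).
by case: eqP zNV => // -> /negP[]; apply: mem_VM xpM (set22 x p).
Qed.

Lemma induced_matching_nbr M x y z : induced_matchingb e M ->
  e x y -> [set x; y] \in M -> z \in VM M -> e x z = (z == y).
Proof. by case/induced_matchingP; apply: closed_matching_nbr. Qed.

Lemma induced_matchingS M1 M2 :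
  M1 \subset M2 -> induced_matchingb e M2 -> induced_matchingb e M1.
Proof.
move=> sM /induced_matchingP [mM closedM]; apply/induced_matchingP.
split=> [|x y xV yV exy]; first exact: matchingS mM.
have /VMP [f fM xf] := xV; have VS := subsetP (VMS sM).
have xyM := closedM x y (VS x xV) (VS y yV) exy.
by rewrite (matching_eq mM xyM (subsetP sM f fM) (set21 x y) xf).
Qed.

Lemma induced_matchingU2 M x y : induced_matchingb e M -> e x y ->
  x \notin VM M -> y \notin VM M -> {in VM M, forall z, ~~ e x z && ~~ e y z} ->
  induced_matchingb e ([set x; y] |: M).
Proof.
move=> /induced_matchingP [/matchingP [edgeM disjM] closedM] exy xV yV nbr.
have disj_xy g : g \in M -> [disjoint [set x; y] & g].
  move=> gM; rewrite disjoints_subset subUset !sub1set !inE.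
  by apply/andP; split; [apply: contra xV | apply: contra yV]; apply: mem_VM gM.
apply/induced_matchingP; split.
  apply/matchingP; split=> [f /setU1P [->|/edgeM //]|f g]; first by apply/edgebP; exists x, y.
  move=> /setU1P [->|fM] /setU1P [->|gM]; rewrite ?eqxx // => fg.
  - exact: disj_xy.
  - by rewrite disjoint_sym disj_xy.
  - exact: disjM.
have nbrF z w : (z == x) || (z == y) -> w \in VM M -> e z w = false.
  by move=> /orP [] /eqP -> /nbr /andP [/negbTE ? /negbTE ?].
move=> p q; rewrite VMU1 !inE => /orP [pxy|pV] /orP [qxy|qV] epq.
- move: pxy qxy epq => /orP [] /eqP -> /orP [] /eqP ->; rewrite ?irr_e ?eqxx //.
  by rewrite setUC eqxx.
- by rewrite nbrF in epq.
- by rewrite sym_e nbrF in epq.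
- by rewrite closedM ?orbT.
Qed.

Lemma MIM_maxset M : (M \in MIM e) = maxset (induced_matchingb e) M.
Proof.
rewrite inE; apply/andP/maxsetP => -[imM maxM]; split=> //.
  move=> B imB sMB; apply/eqP; rewrite eq_sym.
  by move/forallP/(_ B): maxM; rewrite properEneq sMB imB andbT implybF negbK.
apply/forallP => B; apply/implyP => ltMB; apply/negP => imB.
have BM := maxM B imB (proper_sub ltMB).
by rewrite BM properxx in ltMB.
Qed.

Lemma MIMP M : reflect
  (induced_matchingb e M /\ forall f, f \notin M -> ~~ induced_matchingb e (f |: M))
  (M \in MIM e).
Proof.
rewrite MIM_maxset; apply: (iffP maxsetP) => -[imM maxM]; split=> //.
  move=> f fM; apply: contra fM => imfM.
  by rewrite -(maxM _ imfM (subsetUr _ _)) setU11.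
move=> B imB sMB; apply/eqP; rewrite eqEsubset sMB andbT.
apply/subsetP => f fB; apply/negPn/negP => /maxM /negP; apply.
by apply: induced_matchingS imB; rewrite subUset sub1set fB.
Qed.

Lemma MIM_extend M : induced_matchingb e M ->
  exists2 X : {set {set T}}, M \subset X & X \in MIM e.
Proof. by move=> /maxset_exists [X maxX sMX]; exists X; rewrite // MIM_maxset. Qed.

Definition relabel (s : {perm T}) M : {set {set T}} := [set s @: f | f : {set T} in M].

Lemma relabelK s : cancel (relabel s) (relabel s^-1).
Proof.
move=> M; rewrite /relabel -imset_comp -[RHS]imset_id; apply: eq_imset => f /=.
by rewrite -imset_comp -[RHS]imset_id; apply: eq_imset => x /=; rewrite permK.
Qed.

Lemma mem_relabel s M f : (s @: f \in relabel s M) = (f \in M).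
Proof. exact/mem_imset/imset_inj/perm_inj. Qed.

Lemma VM_relabel s M : VM (relabel s M) = s @: VM M.
Proof. by rewrite [LHS]cover_imset imset_cover. Qed.

Lemma mem_VM_relabel s M x : (s x \in VM (relabel s M)) = (x \in VM M).
Proof. by rewrite VM_relabel mem_imset //; apply: perm_inj. Qed.

Lemma induced_matching_relabel s M : {mono s : x y / e x y} ->
  induced_matchingb e M -> induced_matchingb e (relabel s M).
Proof.
move=> s_aut /induced_matchingP [/matchingP [edgeM disjM] closedM].
have imset2 x y : s @: [set x; y] = [set s x; s y] by rewrite imsetU1 imset_set1.
apply/induced_matchingP; split; last first.
  rewrite VM_relabel => _ _ /imsetP [x xV ->] /imsetP [y yV ->].
  by rewrite s_aut -imset2 mem_relabel; apply: closedM.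
apply/matchingP; split=> [_ /imsetP [f fM ->]|_ _ /imsetP [f fM ->] /imsetP [g gM ->] fg].
  have /edgebP [x [y [exy ->]]] := edgeM f fM.
  by apply/edgebP; exists (s x), (s y); rewrite s_aut imset2.
rewrite imset_disjoint; last exact: perm_inj.
by apply: disjM => //; apply: contraNneq fg => ->.
Qed.

Lemma MIM_relabel s M : {mono s : x y / e x y} -> M \in MIM e -> relabel s M \in MIM e.
Proof.
move=> s_aut /MIMP [imM maxM]; apply/MIMP; split=> [|f fNM].
  exact: induced_matching_relabel.
apply/negP => /(induced_matching_relabel (can_mono (permKV s) s_aut)).
rewrite {1}/relabel imsetU1 -[[set _ @: _ | _ in relabel s M]]/(relabel _ _) relabelK.
apply/negP/maxM; apply: contra fNM => fM.
suff -> : f = s @: ((s^-1)%g @: f) by rewrite mem_relabel.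
by rewrite -imset_comp (eq_imset _ (permKV s)) imset_id.
Qed.

End InducedMatchings.

Definition MIM_cover (T : finType) (e : rel T) (a b : T) (p q : bool) :
  {set {set {set T}}} :=
  [set M in MIM e | (a \in VM M) == p & (b \in VM M) == q].

Lemma MIM_coverC (T : finType) (e : rel T) a b p q :
  MIM_cover e a b p q = MIM_cover e b a q p.
Proof. by apply/setP => M; rewrite !inE (andbC (_ == p)). Qed.

Lemma card_MIM_cover (T : finType) (e : rel T) a b :
  #|MIM e| = #|MIM_cover e a b true true| + #|MIM_cover e a b true false| +
             #|MIM_cover e a b false true| + #|MIM_cover e a b false false|.
Proof.
set A := [set M | a \in VM M]; set B := [set M | b \in VM M].
rewrite -(cardsID A (MIM e)) -(cardsID B (MIM e :&: A)) -(cardsID B (MIM e :\: A)).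
rewrite addnA; congr (_ + _ + _ + _); apply: eq_card => M; rewrite !inE.
all: by case: (a \in VM M); case: (b \in VM M); rewrite ?andbT ?andbF.
Qed.

Lemma in_MIM_cover (T : finType) (e : rel T) a b p q M :
  (M \in MIM_cover e a b p q) = [&& M \in MIM e, (a \in VM M) == p & (b \in VM M) == q].
Proof. by rewrite in_set. Qed.

Section Shift.
Variable T : finType.
Variable e : rel T.
Hypothesis sym_e : symmetric e.
Hypothesis irr_e : irreflexive e.
Variables a b : T.
Hypothesis eab : e a b.

Local Notation sh := (shift e a b).
Let twin z := if z == a then b else z.

Let ba : b != a.
Proof. by apply: contraTneq eab => ->; rewrite irr_e. Qed.

(* G_{a->b} is G pulled back along [twin], which glues a onto b. *)
Lemma shiftE x y : sh x y = (x != y) && ((twin x == twin y) || e (twin x) (twin y)).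
Proof.
rewrite /shift /shift_adj /twin !inE.
case: (eqVneq x a) => [->|xa]; case: (eqVneq y a) => [->|ya] //=.
- by rewrite irr_e andbF.
- rewrite (eq_sym b); case: eqP => [->|_]; rewrite ?eab //.
  by case: (e a y); case: (e b y).
- rewrite xa (sym_e x); case: eqP => [->|_]; rewrite ?eab //.
  by case: (e a x); case: (e b x).
- by case: eqVneq => [->|]; rewrite ?irr_e.
Qed.

Lemma shift_sym : symmetric sh.
Proof. by move=> x y; rewrite !shiftE (eq_sym x) (eq_sym (twin x)) sym_e. Qed.

Lemma shift_irr : irreflexive sh.
Proof. by move=> x; rewrite shiftE eqxx. Qed.

Lemma shift_tperm : {mono tperm a b : x y / sh x y}.
Proof.
have twinT z : twin (tperm a b z) = twin z.
  by rewrite /twin; case: tpermP => [->|->|/eqP/negbTE -> _]; rewrite ?eqxx ?(negbTE ba).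
by move=> x y; rewrite !shiftE !twinT (inj_eq perm_inj).
Qed.

Lemma shift_offE x y : x != a -> y != a -> sh x y = e x y.
Proof.
move=> /negbTE xa /negbTE ya; rewrite shiftE /twin xa ya.
by case: eqVneq => [->|]; rewrite ?irr_e.
Qed.

Lemma shift_srcE y : sh a y = (y != a) && ((y == b) || e b y).
Proof.
rewrite shiftE /twin eqxx eq_sym.
by case: (eqVneq y a) => [->|/negbTE ya]; rewrite ?ya // (eq_sym b).
Qed.

Lemma shift_eq_off (S : {set T}) : a \notin S -> {in S &, e =2 sh}.
Proof. by move=> aNS x y xS yS; rewrite shift_offE //; apply: contraNneq aNS => <-. Qed.

Lemma eq_shift_on (S : {set T}) : {in S, e a =1 sh a} -> {in S &, e =2 sh}.
Proof.
move=> eq_a x y xS yS; have [->|xa] := eqVneq x a; first exact: eq_a.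
have [->|ya] := eqVneq y a; first by rewrite sym_e shift_sym eq_a.
by rewrite shift_offE.
Qed.

Lemma MIM_shift_of_nbr M s : M \in MIM e -> a \notin VM M ->
  s \in VM M -> sh a s -> M \in MIM sh.
Proof.
move=> /(MIMP sym_e irr_e) [imM maxM] aNV sV ash.
apply/(MIMP shift_sym shift_irr); split.
  by rewrite -(eq_induced_matching (shift_eq_off aNV)).
move=> f fNM; apply/negP => imf; have [af|aNf] := boolP (a \in f); last first.
  have aNfM : a \notin VM (f |: M) by rewrite VMU1 inE negb_or aNf.
  by move/negP: (maxM f fNM); rewrite (eq_induced_matching (shift_eq_off aNfM)).
have /(induced_matchingP shift_sym shift_irr) [mf closedf] := imf.
have := closedf a s; rewrite VMU1 !inE af sV orbT => /(_ isT isT ash).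
case/orP => [/eqP asf|asM]; last by rewrite (mem_VM asM (set21 a s)) in aNV.
have /VMP [g gM sg] := sV.
have sf : s \in f by rewrite -asf set22.
by rewrite (matching_eq mf (setU11 f M) (setU1r f gM) sf sg) gM in fNM.
Qed.

Local Notation W1 := (N e a :\: Nc e b).
Local Notation W4 := (~: (Nc e a :|: Nc e b)).

Hypothesis noMIM_W1 :
  ~ (exists M, M \in MIM e /\ VM M \subset W1 :|: W4 /\ VM M :&: W1 != set0).

Lemma MIM_notin_nbr M : M \in MIM e -> a \notin VM M -> b \notin VM M ->
  exists2 s, s \in VM M & e b s.
Proof.
move=> MIM_M aNV bNV; apply/exists_inP.
have [//|/exists_inPn nbrNb] := boolP [exists s in VM M, e b s]; exfalso.
have neq_ab z : z \in VM M -> (z != a) && (z != b).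
  by move=> zV; apply/andP; split; [apply: contraNneq aNV | apply: contraNneq bNV] => <-.
have [/exists_inP [s sV eas]|] := boolP [exists s in VM M, e a s].
  apply: noMIM_W1; exists M; split=> //; split.
    apply/subsetP => z zV; have /andP [za zb] := neq_ab z zV.
    by rewrite !inE (negbTE za) (negbTE zb) (negbTE (nbrNb z zV)); case: (e a z).
  apply/set0Pn; exists s; have /andP [_ sb] := neq_ab s sV.
  by rewrite !inE sV eas (negbTE sb) (negbTE (nbrNb s sV)).
move=> /exists_inPn nbrNa.
have /(MIMP sym_e irr_e) [imM maxM] := MIM_M.
have abNM : [set a; b] \notin M by apply: contra aNV => /mem_VM; apply; rewrite set21.
move/negP: (maxM _ abNM); apply; apply: induced_matchingU2 => // z zV.
by rewrite nbrNa ?nbrNb.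
Qed.

Lemma MIM_shift_notin M : M \in MIM e -> a \notin VM M -> M \in MIM sh.
Proof.
move=> MIM_M aNV; have [bV|bNV] := boolP (b \in VM M).
  by apply: (MIM_shift_of_nbr MIM_M aNV bV); rewrite shift_srcE eqxx ba.
have [s sV ebs] := MIM_notin_nbr MIM_M aNV bNV.
apply: (MIM_shift_of_nbr MIM_M aNV sV); rewrite shift_srcE ebs orbT andbT.
by apply: contraNneq aNV => <-.
Qed.

Lemma shift_agree_off_W1 X z : induced_matchingb sh X -> [set a; b] \in X ->
  z \in VM X -> z \notin W1 -> e a z = sh a z.
Proof.
move=> imX abX zX zNW1.
have shab : sh a b by rewrite shift_srcE eqxx ba.
have shba : sh b a by rewrite shift_sym.
have baX : [set b; a] \in X by rewrite setUC.
rewrite (induced_matching_nbr shift_sym shift_irr imX shab abX zX).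
have [->|zb] := eqVneq z b; first exact: eab.
apply: contraNF zNW1 => eaz; have za : z != a by apply: contraTneq eaz => ->; rewrite irr_e.
rewrite !inE eaz andbT negb_or zb /= -(shift_offE ba za).
by rewrite (induced_matching_nbr shift_sym shift_irr imX shba baX zX) (negbTE za).
Qed.

Lemma MIM_shift_restrict M : M \in MIM_cover e a b true true ->
  exists2 X, X \in MIM_cover sh a b true true & M = [set g in X | [disjoint g & W1]].
Proof.
rewrite in_MIM_cover !eqb_id => /and3P [MIM_M aV bV].
have /(MIMP sym_e irr_e) [imM maxM] := MIM_M.
have abM : [set a; b] \in M by case/(induced_matchingP sym_e irr_e): imM => _; apply.
have baM : [set b; a] \in M by rewrite setUC.
have nbrM := induced_matching_nbr sym_e irr_e imM.
have VM_W1 y : y \in VM M -> y \notin W1.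
  by move=> yV; rewrite !inE (nbrM _ _ _ eab abM yV); case: eqP => [->|]; rewrite ?eqxx ?andbF.
have eq_aM : {in VM M, e a =1 sh a}.
  move=> y yV; have eba : e b a by rewrite sym_e.
  rewrite (nbrM _ _ _ eab abM yV) shift_srcE (nbrM _ _ _ eba baM yV).
  by case: (eqVneq y a) => [->|_]; rewrite ?orbF // eq_sym (negbTE ba).
have imM_sh : induced_matchingb sh M by rewrite -(eq_induced_matching (eq_shift_on eq_aM)).
have [X sMX MIM_X] := MIM_extend imM_sh.
have /(MIMP shift_sym shift_irr) [imX _] := MIM_X.
have abX := subsetP sMX _ abM.
exists X; first by rewrite in_MIM_cover !eqb_id MIM_X !(subsetP (VMS sMX)).
apply/setP => g; rewrite inE; have [gM|gNM] := boolP (g \in M).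
  rewrite (subsetP sMX g gM) /=; apply/esym; rewrite disjoint_subset.
  by apply/subsetP => y /(mem_VM gM) /VM_W1.
(* An edge of X \ M avoiding W1 would extend M in G, since G and G_{a->b}
   agree on the edges it spans with M. *)
apply/esym/negbTE/negP => /andP [gX gW1]; move/negP: (maxM g gNM); apply.
have imgM : induced_matchingb sh (g |: M).
  by apply: (induced_matchingS shift_sym shift_irr _ imX); rewrite subUset sub1set gX sMX.
rewrite (eq_induced_matching (e' := sh) (eq_shift_on _)) // => z.
rewrite VMU1 inE => /orP [zg|/eq_aM //].
by apply: shift_agree_off_W1 (mem_VM gX zg) _; rewrite ?(disjointFr gW1 zg).
Qed.

Lemma card_MIM_shift :
  #|MIM_cover e a b true true| + #|MIM_cover e a b false false| +
    2 * #|MIM_cover e a b false true| <= #|MIM sh|.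
Proof.
rewrite (card_MIM_cover sh a b).
have le_both : #|MIM_cover e a b true true| <= #|MIM_cover sh a b true true|.
  pose restrict (X : {set {set T}}) := [set g in X | [disjoint g & W1]].
  apply: leq_trans (leq_imset_card restrict _); apply/subset_leq_card/subsetP => M.
  by case/MIM_shift_restrict => X X_tt ->; apply: imset_f.
have le_notin q : #|MIM_cover e a b false q| <= #|MIM_cover sh a b false q|.
  apply/subset_leq_card/subsetP => M; rewrite !in_MIM_cover eqbF_neg => /and3P [MIM_M aNV ->].
  by rewrite MIM_shift_notin ?aNV.
have le_swap : #|MIM_cover e a b false true| <= #|MIM_cover sh a b true false|.
  rewrite -(card_imset _ (can_inj (relabelK (tperm a b)))).
  apply/subset_leq_card/subsetP => _ /imsetP [M + ->].
  rewrite !in_MIM_cover !eqbF_neg !eqb_id => /and3P [MIM_M aNV bV].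
  rewrite (MIM_relabel shift_sym shift_irr shift_tperm (MIM_shift_notin MIM_M aNV)).
  have := mem_VM_relabel (tperm a b) M b; rewrite tpermR => ->.
  by have := mem_VM_relabel (tperm a b) M a; rewrite tpermL => ->; rewrite aNV bV.
have := le_notin true; have := le_notin false; lia.
Qed.
End Shift.

Theorem lemma2p1 (T : finType) (e : rel T) (esym : symmetric e)
  (eirr : irreflexive e) (u v : T) (huv : e u v) :
  let W1 := N e u :\: Nc e v in
  let W3 := N e v :\: Nc e u in
  let W4 := ~: (Nc e u :|: Nc e v) in
  ~ (exists M, M \in MIM e /\ VM M \subset W1 :|: W4 /\ VM M :&: W1 != set0) ->
  ~ (exists M, M \in MIM e /\ VM M \subset W3 :|: W4 /\ VM M :&: W3 != set0) ->
  #|MIM e| <= #|MIM (shift e u v)| \/ #|MIM e| <= #|MIM (shift e v u)|.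
Proof.
move=> W1 W3 W4 noMIM_W1 noMIM_W3.
have evu : e v u by rewrite esym.
have noMIM_W3' : ~ (exists M, M \in MIM e /\
    VM M \subset W3 :|: ~: (Nc e v :|: Nc e u) /\ VM M :&: W3 != set0).
  by rewrite [Nc e v :|: _]setUC.
have := card_MIM_shift esym eirr huv noMIM_W1.
have := card_MIM_shift esym eirr evu noMIM_W3'.
rewrite !(MIM_coverC e v u) (card_MIM_cover e u v); lia.
Qed.
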